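(* Let $A$ be an integral domain whose integral closure $A'$ has a representation $A'=\bigcap_{V\in\mathcal V}V$, where $\mathcal V$ is a family of valuation overrings of $A$ of finite character. If $B$ is a finitely generated (as an $A$-algebra) overring of $A$ that is flat over $A$ and well-centered on $A$, then $B$ is a localization of $A$.
   Context: For an integral domain $A$ with field of fractions $K$, an overring of $A$ is a subring $B$ of $K$ with $A\subseteq B$; a valuation overring is an overring that is a valuation domain. A family $\mathcal V$ of such valuation domains has finite character if each nonzero element of $K$ is a unit in all but finitely many $V\in\mathcal V$. An overring $B$ is well-centered on $A$ if for each $b\in B$ there is a unit $u$ of $B$ with $ub\in A$. $B$ is a localization of $A$ if $B=S^{-1}A$ for some multiplicatively closed set $S$ of nonzero elements of $A$. *)

From Stdlib Require List.
From HB Require Import structures.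
From mathcomp Require Import all_boot all_order all_algebra.
Set Implicit Arguments. Unset Strict Implicit. Unset Printing Implicit Defensive.
Import Order.TTheory GRing.Theory Num.Theory.
Local Open Scope ring_scope.

Section Defs.
Variable K : fieldType.

Definition is_subring (S : K -> Prop) : Prop :=
  S 1 /\ (forall x y, S x -> S y -> S (x - y)) /\
  (forall x y, S x -> S y -> S (x * y)).

(* K is the field of fractions of the subring A (A is then an integral domain) *)
Definition is_frac_field_of (A : K -> Prop) : Prop :=
  forall x : K, exists a b, A a /\ A b /\ b != 0 /\ x = a / b.

Definition overring (A B : K -> Prop) : Prop :=
  is_subring B /\ (forall x, A x -> B x).

Definition valuation_subring (V : K -> Prop) : Prop :=
  is_subring V /\ (forall x : K, x != 0 -> V x \/ V x^-1).

Definition valuation_overring (A V : K -> Prop) : Prop :=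
  overring A V /\ valuation_subring V.

Definition unit_in (S : K -> Prop) (x : K) : Prop := S x /\ x != 0 /\ S x^-1.

Definition integral_over (A : K -> Prop) (x : K) : Prop :=
  exists p : {poly K}, p \is monic /\ (forall i, A p`_i) /\ root p x.

Definition integral_closure (A : K -> Prop) : K -> Prop := integral_over A.

Definition finite_character (I : Type) (V : I -> K -> Prop) : Prop :=
  forall x : K, x != 0 ->
    exists s : seq I, forall i, ~ unit_in (V i) x -> List.In i s.

Definition generated_algebra (A : K -> Prop) (s : seq K) : K -> Prop :=
  fun x => forall S : K -> Prop, is_subring S -> (forall a, A a -> S a) ->
             (forall y, List.In y s -> S y) -> S x.

Definition fg_algebra (A B : K -> Prop) : Prop :=
  exists s : seq K, forall x, B x <-> generated_algebra A s x.

(* B is flat as an A-module, via the equational criterion of flatness: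
   every A-linear relation among elements of B is trivial. *)
Definition flat_over (A B : K -> Prop) : Prop :=
  forall (n : nat) (a b : 'I_n -> K),
    (forall i, A (a i)) -> (forall i, B (b i)) ->
    \sum_(i < n) a i * b i = 0 ->
    exists (m : nat) (c : 'I_n -> 'I_m -> K) (y : 'I_m -> K),
      (forall i j, A (c i j)) /\ (forall j, B (y j)) /\
      (forall i, b i = \sum_(j < m) c i j * y j) /\
      (forall j, \sum_(i < n) a i * c i j = 0).

Definition well_centered (A B : K -> Prop) : Prop :=
  forall b, B b -> exists u, unit_in B u /\ A (u * b).

Definition mult_closed_nonzero (A S : K -> Prop) : Prop :=
  (forall s, S s -> A s /\ s != 0) /\ S 1 /\
  (forall s t, S s -> S t -> S (s * t)).

Definition localization_of (A B : K -> Prop) : Prop :=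
  exists S : K -> Prop, mult_closed_nonzero A S /\
    (forall x, B x <-> exists a s, A a /\ S s /\ x = a / s).

End Defs.

From mathcomp Require Import all_boot all_order all_algebra ring.
From Stdlib Require Import Classical.
Set Implicit Arguments. Unset Strict Implicit. Unset Printing Implicit Defensive.
Import GRing.Theory.
Local Open Scope ring_scope.

(* Let B = A[s]. By finite character only finitely many V in the family miss
   some generator in s, and a product b of geometric sums 1 + y + ... + y^N
   (y in s, with N chosen with care for the residue fields) is a common
   denominator of s in each of them. Well-centeredness gives a unit u of B
   with u b in A; then u and every u y lie in all the V, so they are integral
   over A and C = A[u, u s] is a finite A-module with B contained in C[1/u].
   Flatness makes the conductor of C into A generate the unit ideal of B, and
   clearing powers of u gives u^n C in A. Hence d = u^(n+1) is an element of A
   that is a unit of B with d s in A, and B is the localization of A at the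
   elements of A that are units of B. *)

Section Subring.
Variables (K : fieldType) (S : K -> Prop).
Hypothesis S_subring : is_subring S.

Lemma subring1 : S 1. Proof. by case: S_subring. Qed.

Lemma subringB x y : S x -> S y -> S (x - y).
Proof. by case: S_subring => _ [+ _]; apply. Qed.

Lemma subringM x y : S x -> S y -> S (x * y).
Proof. by case: S_subring => _ [_]; apply. Qed.

Lemma subring0 : S 0. Proof. by rewrite -(subrr 1); apply: subringB; apply: subring1. Qed.

Lemma subringN x : S x -> S (- x).
Proof. by move=> Sx; rewrite -sub0r; apply: subringB => //; apply: subring0. Qed.

Lemma subringD x y : S x -> S y -> S (x + y).
Proof. by move=> Sx Sy; rewrite -(opprK y); apply: subringB => //; apply: subringN. Qed.

Lemma subringX x n : S x -> S (x ^+ n).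
Proof.
move=> Sx; elim: n => [|n IH]; first by rewrite expr0; apply: subring1.
by rewrite exprS; apply: subringM.
Qed.

Lemma subring_sum (I : Type) (r : seq I) (F : I -> K) :
  (forall i, S (F i)) -> S (\sum_(i <- r) F i).
Proof. by move=> SF; apply: (big_rec S) => [|i x _]; [exact: subring0 | exact: subringD]. Qed.

Lemma subring_unit1 : unit_in S 1.
Proof. by rewrite /unit_in invr1; split; [|split]; rewrite ?oner_neq0 //; apply: subring1. Qed.

Lemma subring_unitM x y : unit_in S x -> unit_in S y -> unit_in S (x * y).
Proof.
move=> [Sx [x0 Sx']] [Sy [y0 Sy']].
by split; [|split]; rewrite ?invfM ?mulf_neq0 //; apply: subringM.
Qed.

Lemma subring_unitX x n : unit_in S x -> unit_in S (x ^+ n).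
Proof.
move=> Ux; elim: n => [|n IH]; first by rewrite expr0; apply: subring_unit1.
by rewrite exprS; apply: subring_unitM.
Qed.

End Subring.

Definition geosum (K : fieldType) (n : nat) (x : K) : K := \sum_(j < n) x ^+ j.

Section GeometricSums.
Variable K : fieldType.
Implicit Types (x : K) (m n : nat).

Lemma geosumS n x : geosum n.+1 x = 1 + x * geosum n x.
Proof.
rewrite /geosum big_ord_recl expr0 mulr_sumr.
by congr (_ + _); apply: eq_bigr => i _; rewrite exprS.
Qed.

Lemma geosumSr n x : geosum n.+1 x = geosum n x + x ^+ n.
Proof. by rewrite /geosum big_ord_recr. Qed.

Lemma geosumD m n x : geosum (m + n) x = geosum m x + x ^+ m * geosum n x.
Proof.
elim: n => [|n IH]; first by rewrite addn0 /geosum big_ord0 mulr0 addr0.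
by rewrite addnS !geosumSr IH exprD; ring.
Qed.

Lemma geosumM m n x : geosum (m * n) x = geosum m x * geosum n (x ^+ m).
Proof.
elim: n => [|n IH]; first by rewrite muln0 /geosum !big_ord0 mulr0.
by rewrite mulnS addnC geosumD IH geosumSr -exprM; ring.
Qed.

Lemma geosum_rev n x : x != 0 -> geosum n.+1 x = x ^+ n * geosum n.+1 x^-1.
Proof.
move=> x0; elim: n => [|n IH]; first by rewrite mul1r /geosum !big_ord1 !expr0.
rewrite geosumS IH [in RHS]geosumSr mulrDr -exprMn mulfV // expr1n exprS.
ring.
Qed.

Lemma subring_geosum (S : K -> Prop) n x : is_subring S -> S x -> S (geosum n x).
Proof. by move=> S_subring Sx; apply: (subring_sum S_subring) => i; apply: subringX. Qed.

End GeometricSums.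

Definition in_max_ideal (K : fieldType) (V : K -> Prop) (x : K) : Prop :=
  V x /\ ~ unit_in V x.

(* Read in the residue field of V: if x is nonzero there and 1 + ... + x^(n-1)
   vanishes for some n > 0, then 1 + ... + x^(N-1) vanishes as well. *)
Definition geosum_exponent (K : fieldType) (V : K -> Prop) (x : K) (N : nat) : Prop :=
  unit_in V x -> forall n, (0 < n)%N -> in_max_ideal V (geosum n x) ->
    in_max_ideal V (geosum N x).

Section Valuation.
Variables (K : fieldType) (V : K -> Prop).
Hypothesis V_valuation : valuation_subring V.
Let V_subring : is_subring V. Proof. by case: V_valuation. Qed.
Let V_or_inv x : x != 0 -> V x \/ V x^-1. Proof. by case: V_valuation => _; apply. Qed.
Implicit Types (x y a r : K) (n N : nat).

Lemma max_idealMr a r : V r -> in_max_ideal V a -> in_max_ideal V (a * r).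
Proof.
move=> Vr [Va Na]; split; first exact: subringM.
move=> [_ [ar0 Var']]; apply: Na.
have a0 : a != 0 by apply: contraNneq ar0 => ->; rewrite mul0r.
have r0 : r != 0 by apply: contraNneq ar0 => ->; rewrite mulr0.
split; [exact: Va | split; first exact: a0].
have -> : a^-1 = r * (a * r)^-1 by rewrite invfM mulrCA mulfV // mulr1.
exact: subringM.
Qed.

Lemma max_idealD a r : in_max_ideal V a -> in_max_ideal V r -> in_max_ideal V (a + r).
Proof.
move=> Ma Mr; have [->|a0] := eqVneq a 0; first by rewrite add0r.
have [->|r0] := eqVneq r 0; first by rewrite addr0.
have ar0 : a / r != 0 by rewrite mulf_neq0 // invr_eq0.
case: (V_or_inv ar0) => [Var|]; last rewrite invf_div => Vra.
- have -> : a + r = r * (a / r + 1) by rewrite mulrDr mulrCA mulfV // !mulr1.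
  by apply: max_idealMr => //; apply: subringD => //; apply: subring1.
- have -> : a + r = a * (1 + r / a) by rewrite mulrDr mulr1 mulrCA mulfV // mulr1.
  by apply: max_idealMr => //; apply: subringD => //; apply: subring1.
Qed.

Lemma max_ideal_add_unit x y : in_max_ideal V x -> unit_in V y -> unit_in V (x + y).
Proof.
move=> Mx Uy; apply: NNPP => NUxy.
have Mxy : in_max_ideal V (x + y).
  by split=> //; apply: subringD => //; [case: Mx | case: Uy].
have Mnx : in_max_ideal V (- x).
  by rewrite -mulrN1; apply: max_idealMr => //; apply: (subringN V_subring); apply: subring1.
by have [_] := max_idealD Mxy Mnx; rewrite addrC addKr.
Qed.

Lemma max_ideal_geosum_dvd x n N :
  V x -> in_max_ideal V (geosum n x) -> (n %| N)%N -> in_max_ideal V (geosum N x).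
Proof.
move=> Vx Mn /dvdnP [k ->]; rewrite mulnC geosumM.
by apply: max_idealMr => //; apply: subring_geosum => //; apply: subringX.
Qed.

Lemma geosum_unit_in x N : V x -> geosum_exponent V x N -> unit_in V (geosum N.+1 x).
Proof.
move=> Vx HN; have Vg : V (geosum N.+1 x) by apply: subring_geosum.
case: (classic (unit_in V x)) => [Ux | NUx].
- case: (classic (exists2 n, (0 < n)%N & in_max_ideal V (geosum n x))) => [[n n0 Mn]|NM].
    by rewrite geosumSr; apply: max_ideal_add_unit; [exact: HN Mn | exact: subring_unitX].
  by apply: NNPP => NUg; apply: NM; exists N.+1.
- rewrite geosumS addrC; apply: max_ideal_add_unit; last exact: subring_unit1.
  by apply: max_idealMr; [apply: subring_geosum | split].
Qed.

Lemma geosum_denominator_notin x N : ~ V x -> (0 < N)%N ->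
  geosum N.+1 x != 0 /\ V (geosum N.+1 x)^-1 /\ V (x / geosum N.+1 x).
Proof.
move=> NVx; case: N => // N _.
have x0 : x != 0 by apply/eqP => x0; apply: NVx; rewrite x0; apply: subring0.
have Vy : V x^-1 by case: (V_or_inv x0).
have My : in_max_ideal V x^-1 by split=> // -[_ [_]]; rewrite invrK.
have [_ [w0 Vw']] : unit_in V (geosum N.+2 x^-1).
  rewrite geosumS addrC; apply: max_ideal_add_unit; last exact: subring_unit1.
  by apply: max_idealMr => //; apply: subring_geosum.
rewrite geosum_rev //; split; first by rewrite mulf_neq0 // expf_neq0.
rewrite invfM -exprVn; split; first by apply: subringM => //; apply: subringX.
rewrite exprS !mulrA mulfV // mul1r.
by apply: subringM => //; apply: subringX.
Qed.

Lemma geosum_denominator x N : (0 < N)%N -> geosum_exponent V x N ->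
  geosum N.+1 x != 0 /\ V (geosum N.+1 x)^-1 /\ V (x / geosum N.+1 x).
Proof.
move=> N0 HN; case: (classic (V x)) => [Vx|]; last by move/geosum_denominator_notin; apply.
have [Vg [g0 Vg']] := geosum_unit_in Vx HN.
by split; [|split] => //; apply: subringM.
Qed.

End Valuation.

Section ValuationFamily.
Variables (K : fieldType) (I : Type) (V : I -> K -> Prop).
Hypothesis V_valuation : forall i, valuation_subring (V i).
Let V_subring i : is_subring (V i). Proof. by case: (V_valuation i). Qed.

Lemma exists_geosum_exponent x (L : seq I) : exists2 N, (0 < N)%N &
  forall i, List.In i L -> geosum_exponent (V i) x N.
Proof.
elim: L => [|j L [N N0 HN]]; first by exists 1%N.
case: (classic (exists2 n, (0 < n)%N & unit_in (V j) x /\ in_max_ideal (V j) (geosum n x))).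
- move=> [n n0 [Ux Mn]]; exists (n * N)%N; first by rewrite muln_gt0 n0.
  move=> i [<- | iL] Uix m m0 Mm.
    by apply: (max_ideal_geosum_dvd (V_valuation j) Ux.1 Mn); apply: dvdn_mulr.
  have MN := HN i iL Uix m m0 Mm.
  by apply: (max_ideal_geosum_dvd (V_valuation i) Uix.1 MN); apply: dvdn_mull.
- move=> NM; exists N => // i [<- | iL] Uix m m0 Mm; last exact: HN Mm.
  by case: NM; exists m.
Qed.

Lemma exists_geosum_denominator x (L : seq I) : exists N, forall i, List.In i L ->
  geosum N.+1 x != 0 /\ V i (geosum N.+1 x)^-1 /\ V i (x / geosum N.+1 x).
Proof.
have [N N0 HN] := exists_geosum_exponent x L.
by exists N => i iL; apply: geosum_denominator => //; apply: HN.
Qed.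

Lemma exists_common_denominator (L : seq I) (s : seq K) : exists b,
  (forall S, is_subring S -> (forall y, List.In y s -> S y) -> S b) /\
  forall i, List.In i L -> b != 0 /\ V i b^-1 /\ forall y, List.In y s -> V i (y / b).
Proof.
elim: s => [|x s [b [Sb Hb]]].
  exists 1; split=> [S S_subring _ | i _]; first exact: subring1.
  by rewrite invr1 oner_neq0; split=> //; split=> //; apply: subring1.
have [N HN] := exists_geosum_denominator x L; set g := geosum N.+1 x in HN *.
exists (g * b); split=> [S S_subring Ss | i iL].
  apply: subringM => //; first by apply: subring_geosum => //; apply: Ss; left.
  by apply: Sb => // y ys; apply: Ss; right.
have [g0 [Vg' Vxg]] := HN i iL; have [b0 [Vb' Vyb]] := Hb i iL.
rewrite mulf_neq0 // invfM; split=> //; split; first exact: subringM.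
move=> y [<- | ys]; first by rewrite mulrA; apply: subringM.
by rewrite mulrCA; apply: subringM => //; apply: Vyb.
Qed.

Lemma finite_character_seq (s : seq K) : finite_character V ->
  exists L : seq I, forall i, (exists2 y, List.In y s & ~ V i y) -> List.In i L.
Proof.
move=> V_fc; elim: s => [|x s [L HL]]; first by exists [::] => i [].
have [->|x0] := eqVneq x 0.
  exists L => i [y [<- | ys] NVy]; last by apply: HL; exists y.
  by case: NVy; apply: subring0.
have [Lx HLx] := V_fc x x0; exists (Lx ++ L).
move=> i [y [<- | ys] NVy]; apply: List.in_or_app; [left | right].
  by apply: HLx => -[].
by apply: HL; exists y.
Qed.

End ValuationFamily.

Section LinearCombinations.
Variable K : fieldType.
Implicit Types (P Q : K -> Prop) (x y : K).

Inductive lincomb P Q : K -> Prop :=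
| lincomb0 : lincomb P Q 0
| lincomb_cons a g x : P a -> Q g -> lincomb P Q x -> lincomb P Q (a * g + x).

Lemma lincombD P Q x y : lincomb P Q x -> lincomb P Q y -> lincomb P Q (x + y).
Proof.
move=> Px Py; elim: Px => [|a g x' Pa Qg _ IH]; first by rewrite add0r.
by rewrite -addrA; apply: lincomb_cons.
Qed.

Lemma lincomb_term P Q a g : P a -> Q g -> lincomb P Q (a * g).
Proof. by move=> Pa Qg; rewrite -[_ * _]addr0; apply: lincomb_cons => //; apply: lincomb0. Qed.

Lemma lincomb_sum P Q m (c y : 'I_m -> K) :
  (forall j, P (c j) /\ Q (y j)) -> lincomb P Q (\sum_(j < m) c j * y j).
Proof.
move=> PQ; apply: (big_rec (lincomb P Q)) => [|j x _]; first exact: lincomb0.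
by have [Pc Qy] := PQ j; apply: lincomb_cons.
Qed.

Lemma lincombZ P Q c x :
  (forall a, P a -> P (c * a)) -> lincomb P Q x -> lincomb P Q (c * x).
Proof.
move=> Pc; elim=> [|a g x' Pa Qg _ IH]; first by rewrite mulr0; apply: lincomb0.
by rewrite mulrDr mulrA; apply: lincomb_cons => //; apply: Pc.
Qed.

Lemma lincombM P1 Q1 P2 Q2 P3 Q3 x y :
  (forall a b, P1 a -> P2 b -> P3 (a * b)) -> (forall g h, Q1 g -> Q2 h -> Q3 (g * h)) ->
  lincomb P1 Q1 x -> lincomb P2 Q2 y -> lincomb P3 Q3 (x * y).
Proof.
move=> P123 Q123 Px Py; elim: Px => [|a g x' Pa Qg _ IH]; first by rewrite mul0r; apply: lincomb0.
rewrite mulrDl; apply: lincombD => //.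
elim: Py => [|b h y' Pb Qh _ IHy]; first by rewrite mulr0; apply: lincomb0.
rewrite mulrDr; apply: lincombD => //.
have -> : a * g * (b * h) = (a * b) * (g * h) by ring.
by apply: lincomb_term; [apply: P123 | apply: Q123].
Qed.

Lemma lincomb_weaken P1 P2 Q x :
  (forall a, P1 a -> P2 a) -> lincomb P1 Q x -> lincomb P2 Q x.
Proof.
move=> P12; elim=> [|a g x' Pa Qg _ IH]; first exact: lincomb0.
by apply: lincomb_cons => //; apply: P12.
Qed.

End LinearCombinations.

Definition span (K : fieldType) (A : K -> Prop) (G : seq K) : K -> Prop :=
  lincomb A (fun g => g \in G).

Definition mulseq (K : fieldType) (G H : seq K) : seq K := [seq g * h | g <- G, h <- H].

Definition span_mul_closed (K : fieldType) (A : K -> Prop) (G : seq K) : Prop :=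
  span A G 1 /\ forall g h, g \in G -> h \in G -> span A G (g * h).

Definition conductor (K : fieldType) (A C : K -> Prop) (c : K) : Prop :=
  A c /\ forall z, C z -> A (c * z).

Section Span.
Variables (K : fieldType) (A : K -> Prop).
Hypothesis A_subring : is_subring A.
Implicit Types (G H : seq K) (x y : K).

Lemma spanZ G c x : A c -> span A G x -> span A G (c * x).
Proof. by move=> Ac; apply: lincombZ => a Aa; apply: subringM. Qed.

Lemma spanD G x y : span A G x -> span A G y -> span A G (x + y).
Proof. exact: lincombD. Qed.

Lemma span_mem G g : g \in G -> span A G g.
Proof. by move=> Gg; rewrite -[g]mul1r; apply: lincomb_term => //; apply: subring1. Qed.

Lemma span_trans G H x : (forall g, g \in G -> span A H g) -> span A G x -> span A H x.
Proof.
move=> GH; elim=> [|a g x' Aa Gg _ IH]; first exact: lincomb0.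
by apply: spanD => //; apply: spanZ => //; apply: GH.
Qed.

Lemma span_mulseq G H x y : span A G x -> span A H y -> span A (mulseq G H) (x * y).
Proof.
apply: lincombM => [a b|g h Gg Hh]; first exact: subringM.
by apply/allpairsP; exists (g, h).
Qed.

Lemma span_mul_closedM G x y : span_mul_closed A G ->
  span A G x -> span A G y -> span A G (x * y).
Proof.
move=> [_ GG] Gx Gy; apply: (@span_trans (mulseq G G)); last exact: span_mulseq.
by move=> z /allpairsP [[g h] [/= Gg Gh ->]]; apply: GG.
Qed.

Lemma span_subring G : span_mul_closed A G -> is_subring (span A G).
Proof.
move=> GG; split; first by case: GG.
split=> [x y Gx Gy|x y]; last exact: span_mul_closedM.
apply: spanD => //; rewrite -mulN1r; apply: spanZ => //.
by apply: (subringN A_subring); apply: subring1.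
Qed.

Lemma span_mulseql G H x : span_mul_closed A H -> span A G x -> span A (mulseq G H) x.
Proof. by move=> [H1 _] Gx; rewrite -[x]mulr1; apply: span_mulseq. Qed.

Lemma span_mulseqr G H x : span_mul_closed A G -> span A H x -> span A (mulseq G H) x.
Proof. by move=> [G1 _] Hx; rewrite -[x]mul1r; apply: span_mulseq. Qed.

Lemma span_mul_closed_mulseq G H :
  span_mul_closed A G -> span_mul_closed A H -> span_mul_closed A (mulseq G H).
Proof.
move=> GG HH; split; first by rewrite -[1]mulr1; apply: span_mulseq; [case: GG | case: HH].
move=> z w /allpairsP [[g h] [/= Gg Hh ->]] /allpairsP [[g' h'] [/= Gg' Hh' ->]].
have -> : g * h * (g' * h') = (g * g') * (h * h') by ring.
by apply: span_mulseq; [case: GG => _; apply | case: HH => _; apply].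
Qed.

Lemma span_mul_closed1 : span_mul_closed A [:: 1].
Proof.
split=> [|g h]; first by apply: span_mem; rewrite inE.
by rewrite !inE => /eqP -> /eqP ->; rewrite mulr1; apply: span_mem; rewrite inE.
Qed.

Lemma span_conductor G c : conductor A (fun g => g \in G) c -> conductor A (span A G) c.
Proof.
move=> [Ac AcG]; split=> // z; elim=> [|a g x Aa Gg _ IH]; first by rewrite mulr0; apply: subring0.
by rewrite mulrDr mulrCA; apply: subringD => //; apply: subringM => //; apply: AcG.
Qed.

End Span.

Section IntegralSpan.
Variables (K : fieldType) (A : K -> Prop).
Hypothesis A_subring : is_subring A.

Lemma monic_root_size_gt1 (p : {poly K}) e : p \is monic -> root p e -> (1 < size p)%N.
Proof.
move=> mp rp; rewrite ltnNge; apply/negP => /size1_polyC ep.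
by move: mp rp; rewrite ep => /monicP; rewrite lead_coefC => ->; rewrite /root hornerC oner_eq0.
Qed.

Lemma integral_powers_span e : integral_over A e -> exists G : seq K,
  [/\ span_mul_closed A G, span A G e & forall g, g \in G -> exists j, g = e ^+ j].
Proof.
move=> [p [mp [Ap rp]]]; set d := (size p).-1.
have sp : size p = d.+1 by rewrite /d prednK // ltnW // (monic_root_size_gt1 mp rp).
set G := [seq e ^+ j | j <- iota 0 d].
have inG j : (j < d)%N -> e ^+ j \in G by move=> jd; apply: map_f; rewrite mem_iota.
have G_top : span A G (e ^+ d).
  move: rp; rewrite /root horner_coef sp big_ord_recr /= -/d.
  have -> : p`_d = 1 by move/monicP: mp; rewrite /lead_coef sp.
  rewrite mul1r addrC addr_eq0 => /eqP ->; rewrite -sumrN.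
  apply: (big_rec (span A G)) => [|i x _ Gx]; first exact: lincomb0.
  by rewrite -mulNr; apply: lincomb_cons => //; [apply: subringN | apply: inG].
have G_mule x : span A G x -> span A G (e * x).
  elim=> [|a g x' Aa Gg _ IH]; first by rewrite mulr0; apply: lincomb0.
  rewrite mulrDr mulrCA; apply: spanD => //; apply: spanZ => //.
  move/mapP: Gg => [j]; rewrite mem_iota add0n => /andP [_ jd] ->.
  rewrite -exprS; have [jd'|] := ltnP j.+1 d; first by apply: span_mem => //; apply: inG.
  by move=> dj; have -> : j.+1 = d by apply/eqP; rewrite eqn_leq jd dj.
have G_pow n : span A G (e ^+ n).
  elim: n => [|n IH]; last by rewrite exprS; apply: G_mule.
  by apply: span_mem => //; apply: inG; rewrite -ltnS -sp (monic_root_size_gt1 mp rp).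
exists G; split; last by move=> g /mapP [j _ ->]; exists j.
- split=> [|g h /mapP [i _ ->] /mapP [j _ ->]]; first by rewrite -(expr0 e); apply: G_pow.
  by rewrite -exprD; apply: G_pow.
- by rewrite -[e]expr1.
Qed.

Lemma exists_span_of_integrals (B : K -> Prop) (es : seq K) : is_subring B ->
  (forall e, List.In e es -> integral_over A e /\ B e) ->
  exists G, [/\ span_mul_closed A G, forall g, g \in G -> B g &
                forall e, List.In e es -> span A G e].
Proof.
move=> B_subring; elim: es => [|e es IH] es_int.
  exists [:: 1]; split=> //; first exact: span_mul_closed1.
  by move=> g; rewrite inE => /eqP ->; apply: subring1.
have [e_int Be] := es_int e (or_introl erefl).
have [G' [G'_mul G'_B G'_es]] := IH (fun x xs => es_int x (or_intror xs)).
have [Ge [Ge_mul Ge_e Ge_pow]] := integral_powers_span e_int.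
exists (mulseq Ge G'); split; first exact: span_mul_closed_mulseq.
  move=> z /allpairsP [[g h] [/= Gg G'h ->]]; apply: subringM => //; last exact: G'_B.
  by have [j ->] := Ge_pow g Gg; apply: subringX.
move=> x [<- | xs]; first exact: span_mulseql.
by apply: span_mulseqr => //; apply: G'_es.
Qed.

End IntegralSpan.

Section Conductor.
Variables (K : fieldType) (A C : K -> Prop).
Hypothesis A_subring : is_subring A.

Lemma conductor0 : conductor A C 0.
Proof. by split=> [|z _]; rewrite ?mul0r; apply: subring0. Qed.

Lemma conductorD c d : conductor A C c -> conductor A C d -> conductor A C (c + d).
Proof.
move=> [Ac AcC] [Ad AdC]; split=> [|z Cz]; first exact: subringD.
by rewrite mulrDl; apply: subringD; [|apply: AcC|apply: AdC].
Qed.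

Lemma conductorMl z c : (forall x y, C x -> C y -> C (x * y)) ->
  C z -> conductor A C c -> conductor A C (z * c).
Proof.
move=> C_mul Cz [Ac AcC]; split=> [|w Cw]; first by rewrite mulrC; apply: AcC.
by rewrite [z * c]mulrC -mulrA; apply: AcC; apply: C_mul.
Qed.

End Conductor.

Section Flat.
Variables (K : fieldType) (A B : K -> Prop).
Hypotheses (A_subring : is_subring A) (B_subring : is_subring B).
Hypotheses (A_frac : is_frac_field_of A) (B_flat : flat_over A B).

(* Flatness applied to the relation a * 1 - b * (a / b) = 0, where g = a / b. *)
Lemma flat_conductor_ideal g : B g -> lincomb (fun c => A c /\ A (c * g)) B 1.
Proof.
move=> Bg; have [a [b [Aa [Ab [b0 gE]]]]] := A_frac g; subst g.
pose av (i : 'I_2) := if i == ord0 then a else - b.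
pose bv (i : 'I_2) := if i == ord0 then 1 else a / b.
have [|||m [c [y [Ac [By [bvE avc0]]]]]] := B_flat (a := av) (b := bv).
- by move=> i; rewrite /av; case: ifP => _ //; apply: subringN.
- by move=> i; rewrite /bv; case: ifP => _ //; apply: subring1.
- by rewrite !big_ord_recr big_ord0 /= /av /bv /=; field.
have := bvE ord0; rewrite /bv eqxx => ->; apply: lincomb_sum => j; split=> //; split=> //.
have := avc0 j; rewrite !big_ord_recr big_ord0 /= /av /= add0r.
have -> : widen_ord (leqnSn 1) ord_max = ord0 :> 'I_2 by apply: val_inj.
rewrite mulNr => /eqP; rewrite subr_eq0 => /eqP cE.
have -> : c ord0 j * (a / b) = c ord_max j by rewrite mulrA [_ * a]mulrC cE mulrAC mulfV // mul1r.
exact: Ac.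
Qed.

Lemma flat_conductor_ideal_seq (G : seq K) : (forall g, g \in G -> B g) ->
  lincomb (conductor A (fun g => g \in G)) B 1.
Proof.
elim: G => [|g G IH] G_B.
  rewrite -[1]mulr1; apply: lincomb_term; last exact: subring1.
  by split=> [|g]; [apply: subring1 | rewrite in_nil].
have Bg : B g by apply: G_B; rewrite mem_head.
have G'_B h : h \in G -> B h by move=> hG; apply: G_B; rewrite inE hG orbT.
rewrite -[1]mulr1; apply: (lincombM _ _ (flat_conductor_ideal Bg) (IH G'_B)).
- move=> c d [Ac Acg] [Ad AdG]; split=> [|h]; first exact: subringM.
  rewrite inE => /orP [/eqP -> | hG]; first by rewrite mulrAC; apply: subringM.
  by rewrite -mulrA; apply: subringM => //; apply: AdG.
- by move=> x y; apply: subringM.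
Qed.

End Flat.

Definition fractions (K : fieldType) (A S : K -> Prop) (x : K) : Prop :=
  exists a s, A a /\ S s /\ x = a / s.

Section Fractions.
Variables (K : fieldType) (A S : K -> Prop).
Hypotheses (A_subring : is_subring A) (S_mult : mult_closed_nonzero A S).

Lemma fractions_subring : is_subring (fractions A S).
Proof.
have [S_nz [S1 SM]] := S_mult.
split; first by exists 1, 1; rewrite divr1; split=> //; apply: subring1.
split=> x y [a [c [Aa [Sc ->]]]] [a' [c' [Aa' [Sc' ->]]]].
  have [_ c0] := S_nz c Sc; have [_ c'0] := S_nz c' Sc'.
  exists (a * c' - a' * c), (c * c'); split; last by split; [apply: SM | field; rewrite c0 c'0].
  by apply: (subringB A_subring); apply: subringM => //; [case: (S_nz c') | case: (S_nz c)].
have [_ c0] := S_nz c Sc; have [_ c'0] := S_nz c' Sc'.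
exists (a * a'), (c * c'); split; first exact: subringM.
by split; [apply: SM | field; rewrite c0 c'0].
Qed.

Lemma fractions_of x : A x -> fractions A S x.
Proof. by move=> Ax; exists x, 1; rewrite divr1; case: S_mult => _ []. Qed.

End Fractions.

Lemma generated_algebra_min (K : fieldType) (A S : K -> Prop) (s : seq K) x :
  is_subring S -> (forall a, A a -> S a) -> (forall y, List.In y s -> S y) ->
  generated_algebra A s x -> S x.
Proof. by move=> S_subring AS sS; apply. Qed.

Lemma generated_algebra_mem (K : fieldType) (A : K -> Prop) (s : seq K) y :
  List.In y s -> generated_algebra A s y.
Proof. by move=> ys S _ _; apply. Qed.

Section Localization.
Variables (K : fieldType) (A B : K -> Prop) (s : seq K).
Hypotheses (A_subring : is_subring A) (B_overring : overring A B).
Hypothesis B_gen : forall x, B x <-> generated_algebra A s x.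
Let B_subring : is_subring B. Proof. by case: B_overring. Qed.

Lemma localization_of_common_denominator d : A d -> d != 0 -> B d^-1 ->
  (forall y, List.In y s -> A (d * y)) -> localization_of A B.
Proof.
move=> Ad d0 Bd' Ads; pose S c := A c /\ c != 0 /\ B c^-1.
have S_mult : mult_closed_nonzero A S.
  split=> [c [Ac [c0 _]] // |]; split.
    by split; [|split]; rewrite ?invr1 ?oner_neq0 //; apply: subring1.
  move=> c c' [Ac [c0 Bc']] [Ac' [c'0 Bc'']]; split; first exact: subringM.
  by rewrite mulf_neq0 // invfM; split=> //; apply: subringM.
exists S; split=> // x; split=> [/B_gen | [a [c [Aa [[_ [_ Bc']] ->]]]]].
  apply: (generated_algebra_min (fractions_subring A_subring S_mult)) => [a|y ys].
    exact: fractions_of.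
  by exists (d * y), d; split; [exact: Ads | split; [split | rewrite [d * y]mulrC mulfK]].
by apply: subringM => //; case: B_overring => _; apply.
Qed.

End Localization.

Section FlatLocalization.
Variables (K : fieldType) (A B : K -> Prop) (s : seq K) (t : K).
Hypotheses (A_subring : is_subring A) (A_frac : is_frac_field_of A).
Hypotheses (B_overring : overring A B) (B_flat : flat_over A B).
Hypothesis B_gen : forall x, B x <-> generated_algebra A s x.
Hypothesis t_unit : unit_in B t.
Let B_subring : is_subring B. Proof. by case: B_overring. Qed.
Let t0 : t != 0. Proof. by case: t_unit => _ []. Qed.

Section ConductorPower.
Variable G : seq K.
Hypotheses (G_mul : span_mul_closed A G) (G_B : forall g, g \in G -> B g).
Hypotheses (G_t : span A G t) (G_ts : forall y, List.In y s -> span A G (t * y)).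
Let t_powers (c : K) : Prop := exists n, c = t ^+ n.

Lemma span_t_power n : span A G (t ^+ n).
Proof.
elim: n => [|n IH]; first by case: G_mul.
by rewrite exprS; apply: span_mul_closedM.
Qed.

Lemma t_powers_mult_closed : mult_closed_nonzero (span A G) t_powers.
Proof.
split=> [c [n ->] | ]; last split=> [|c c' [n ->] [n' ->]].
- by split; [apply: span_t_power | apply: expf_neq0].
- by exists 0%N.
- by exists (n + n')%N; rewrite exprD.
Qed.

Lemma B_sub_fractions_t_powers x : B x -> fractions (span A G) t_powers x.
Proof.
have G_subring := span_subring A_subring G_mul.
move/B_gen; apply: (generated_algebra_min (fractions_subring G_subring t_powers_mult_closed)).
  move=> a Aa; apply: (fractions_of t_powers_mult_closed).
  by rewrite -[a]mulr1; apply: spanZ => //; case: G_mul.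
move=> y ys; exists (t * y), t; split; first exact: G_ts.
by split; [exists 1%N; rewrite expr1 | rewrite [t * y]mulrC mulfK].
Qed.

Lemma conductor_t_power_lincomb x : lincomb (conductor A (span A G)) B x ->
  exists n, conductor A (span A G) (t ^+ n * x).
Proof.
have G_mulM := span_mul_closedM A_subring G_mul.
elim=> [|c y x' Cc By _ [n2 Cx']].
  by exists 0%N; rewrite mulr0; apply: conductor0.
have [z [_ [Gz [[n1 ->] ->]]]] := B_sub_fractions_t_powers By.
exists (n1 + n2)%N.
have -> : t ^+ (n1 + n2) * (c * (z / t ^+ n1) + x') =
          t ^+ n2 * (z * c) + t ^+ n1 * (t ^+ n2 * x').
  by rewrite exprD; field; rewrite expf_neq0.
apply: conductorD => //; apply: conductorMl => //; try exact: span_t_power.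
exact: conductorMl.
Qed.

Lemma exists_conductor_t_power : exists n, conductor A (span A G) (t ^+ n).
Proof.
have one := flat_conductor_ideal_seq A_subring B_subring A_frac B_flat G_B.
have [n] := conductor_t_power_lincomb (lincomb_weaken (@span_conductor _ _ A_subring G) one).
by rewrite mulr1; exists n.
Qed.

End ConductorPower.

Lemma flat_localization_of_integral_unit : integral_over A t ->
  (forall y, List.In y s -> integral_over A (t * y)) -> localization_of A B.
Proof.
move=> t_int ts_int; have [Bt [_ Bt']] := t_unit.
have Bs y : List.In y s -> B y by move=> ys; apply/B_gen; apply: generated_algebra_mem.
have [G [G_mul G_B G_es]] : exists G, [/\ span_mul_closed A G, forall g, g \in G -> B g &
    forall e, List.In e (t :: map (fun y => t * y) s) -> span A G e].
  apply: exists_span_of_integrals => // e [<- | /List.in_map_iff [y [<- ys]]] //.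
  by split; [apply: ts_int | apply: subringM => //; apply: Bs].
have G_ts y : List.In y s -> span A G (t * y).
  by move=> ys; apply: G_es; right; apply: List.in_map.
have G_t : span A G t by apply: G_es; left.
have [n [Atn AtnG]] := exists_conductor_t_power G_mul G_B G_t G_ts.
apply: (localization_of_common_denominator A_subring B_overring B_gen (d := t ^+ n.+1)).
- by rewrite exprSr; apply: AtnG.
- exact: expf_neq0.
- by rewrite -exprVn; apply: subringX.
- by move=> y ys; rewrite exprSr -mulrA; apply: AtnG; apply: G_ts.
Qed.

End FlatLocalization.

Section WellCentered.
Variables (K : fieldType) (A B : K -> Prop) (s : seq K) (I : Type) (V : I -> K -> Prop).
Hypotheses (V_overring : forall i, valuation_overring A (V i)) (V_fc : finite_character V).
Hypothesis B_subring : is_subring B.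
Hypothesis B_gen : forall x, B x <-> generated_algebra A s x.
Hypothesis B_well_centered : well_centered A B.
Let V_valuation i : valuation_subring (V i). Proof. by case: (V_overring i). Qed.
Let V_subring i : is_subring (V i). Proof. by case: (V_valuation i). Qed.
Let A_sub_V i a : A a -> V i a. Proof. by case: (V_overring i) => -[_ AV] _; apply: AV. Qed.

Lemma exists_unit_in_all_valuations : exists2 u, unit_in B u &
  forall i, V i u /\ forall y, List.In y s -> V i (u * y).
Proof.
have [L L_s] := finite_character_seq V_valuation s V_fc.
have [b [gen_b b_den]] := exists_common_denominator V_valuation L s.
have Bs y : List.In y s -> B y by move=> ys; apply/B_gen; apply: generated_algebra_mem.
have [u [Uu Aub]] := B_well_centered (gen_b B B_subring Bs).
exists u => // i; case: (classic (exists2 y, List.In y s & ~ V i y)) => [NVs | Vs].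
  have [b0 [Vb' Vsb]] := b_den i (L_s i NVs).
  split=> [|y ys]; rewrite -[u](mulfK b0).
    by apply: (subringM (V_subring i)) => //; apply: A_sub_V.
  by rewrite mulrAC -mulrA; apply: (subringM (V_subring i)); [apply: A_sub_V | apply: Vsb].
have B_sub_V x : B x -> V i x.
  move/B_gen; apply: generated_algebra_min => //; first exact: A_sub_V.
  by move=> y ys; apply: NNPP => NVy; apply: Vs; exists y.
case: (Uu) => Bu _; split=> [|y ys]; first exact: B_sub_V.
by apply: B_sub_V; apply: subringM => //; apply: Bs.
Qed.

End WellCentered.

Theorem theorem4p15 (K : fieldType) (A : K -> Prop)
  (I : Type) (V : I -> K -> Prop) (B : K -> Prop) :
  is_subring A -> is_frac_field_of A ->
  (forall i, valuation_overring A (V i)) ->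
  finite_character V ->
  (forall x, integral_closure A x <-> forall i, V i x) ->
  overring A B -> fg_algebra A B -> flat_over A B -> well_centered A B ->
  localization_of A B.
Proof.
move=> A_subring A_frac V_overring V_fc V_int B_overring [s B_gen] B_flat B_wc.
have [u Uu Vu] := exists_unit_in_all_valuations V_overring V_fc B_overring.1 B_gen B_wc.
apply: (flat_localization_of_integral_unit A_subring A_frac B_overring B_flat B_gen Uu).
  by apply/V_int => i; case: (Vu i).
by move=> y ys; apply/V_int => i; case: (Vu i) => _; apply.
Qed.
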